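(* Let $1\le p<\infty$ and let $f\in BV_p[0,1]$ take values in $[0,1]$. For every $\varepsilon>0$ there exists $\eta>0$ such that whenever $0\le x_1<x_2<\dots<x_m\le1$ and $f(x_j)<\eta$ for all $j=1,\dots,m$, one has $\left(\sum_{j=1}^{m-1}|f(x_{j+1})-f(x_j)|^p\right)^{1/p}<\varepsilon$.
   Context: For $1\le p<\infty$, $BV_p[0,1]$ is the set of functions $f:[0,1]\to\mathbb F$ ($\mathbb F\in\{\mathbb R,\mathbb C\}$) with finite total Wiener $p$-variation $\operatorname{Var}_p(f,[0,1]):=\sup\sum_{j=1}^m|f(t_j)-f(t_{j-1})|^p$, the supremum over all partitions $0=t_0<t_1<\dots<t_m=1$. *)

From Stdlib Require Import Reals List Sorted.
Import ListNotations.
Open Scope R_scope.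

(* Real power x^a for x >= 0, with the convention 0^a = 0 (a > 0).
   Stdlib's Rpower 0 a = 1, so we patch the value at 0. *)
Definition rpow (x a : R) : R := if Req_EM_T x 0 then 0 else Rpower x a.

Fixpoint pvar_sum (f : R -> R) (p : R) (l : list R) : R :=
  match l with
  | x :: ((y :: _) as t) => rpow (Rabs (f y - f x)) p + pvar_sum f p t
  | _ => 0
  end.

Definition is_partition01 (l : list R) : Prop :=
  (2 <= length l)%nat /\ Sorted Rlt l /\ hd 1 l = 0 /\ last l 0 = 1.

Definition BV_p (p : R) (f : R -> R) : Prop :=
  exists M : R, forall l, is_partition01 l -> pvar_sum f p l <= M.

(* Take a partition P whose p-variation sum is within d/2 of the supremum
   V, d = eps^p, and merge into it a chain Q on which f < eta.  A jump of P
   over a block of Q is replaced by the detour through the first and last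
   points of the block at a cost of at most (p+1) eta, and a jump of Q across
   a point of P costs at most eta, so the merged partition has sum at least
   var P + var Q - 2 |P| (p+1) eta.  Since it is at most V, var Q < d once
   eta is small compared with 1 / |P|. *)

From Stdlib Require Import Reals List Sorted Lra Lia Classical.
Import ListNotations.
Open Scope R_scope.

Lemma rpow_ge0 x a : 0 <= rpow x a.
Proof. unfold rpow; destruct Req_EM_T; [lra | left; apply exp_pos]. Qed.

Lemma rpow_0_l a : rpow 0 a = 0.
Proof. unfold rpow; destruct Req_EM_T; [reflexivity | lra]. Qed.

Lemma rpow_Rpower x a : 0 < x -> rpow x a = Rpower x a.
Proof. intro; unfold rpow; destruct Req_EM_T; [lra | reflexivity]. Qed.

Lemma rpow_le_compat p x y : 0 <= p -> 0 <= x <= y -> rpow x p <= rpow y p.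
Proof.
  intros Hp [[Hx | <-] Hxy].
  - rewrite !rpow_Rpower by lra; apply Rle_Rpower_l; lra.
  - rewrite rpow_0_l; apply rpow_ge0.
Qed.

Lemma Rpower_le_1 y a : 0 < y <= 1 -> 0 <= a -> Rpower y a <= 1.
Proof.
  intros Hy Ha.
  replace 1 with (Rpower 1 a) by (unfold Rpower; rewrite ln_1, Rmult_0_r; apply exp_0).
  apply Rle_Rpower_l; lra.
Qed.

Lemma rpow_le_self p y : 1 <= p -> 0 <= y <= 1 -> rpow y p <= y.
Proof.
  intros Hp [[Hy | <-] Hy1]; [| rewrite rpow_0_l; lra].
  rewrite rpow_Rpower by lra.
  replace (Rpower y p) with (Rpower y 1 * Rpower y (p - 1))
    by (rewrite <- Rpower_plus; f_equal; ring).
  rewrite Rpower_1 by lra.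
  pose proof (Rpower_le_1 y (p - 1) (conj Hy Hy1) ltac:(lra)).
  nra.
Qed.

Lemma rpow_lipschitz p x y : 1 <= p -> 0 <= x <= y -> y <= 1 ->
  rpow y p - rpow x p <= p * (y - x).
Proof.
  intros Hp [[Hx | <-] [Hxy | <-]] Hy1; try lra.
  - rewrite !rpow_Rpower by lra.
    destruct (MVT_cor2 (fun z => Rpower z p) (fun z => p * Rpower z (p - 1)) x y Hxy)
      as [c [-> Hc]].
    { intros c Hc; apply derivable_pt_lim_power; lra. }
    pose proof (Rpower_le_1 c (p - 1) ltac:(lra) ltac:(lra)).
    rewrite Rmult_assoc; apply Rmult_le_compat_l; nra.
  - rewrite rpow_0_l; pose proof (rpow_le_self p y Hp ltac:(lra)); nra.
Qed.

Lemma rpow_le_shift_small p eta x u : 1 <= p -> 0 <= x <= 1 -> 0 <= u < eta ->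
  rpow x p <= rpow (Rabs (x - u)) p + (p + 1) * eta.
Proof.
  intros Hp Hx Hu; pose proof (rpow_ge0 (Rabs (x - u)) p).
  destruct (Rle_or_lt x eta) as [Hxe | Hex].
  - pose proof (rpow_le_self p x Hp Hx); nra.
  - pose proof (rpow_lipschitz p (x - eta) x Hp ltac:(lra) ltac:(lra)).
    assert (x - eta <= Rabs (x - u)) by (rewrite Rabs_pos_eq; lra).
    pose proof (rpow_le_compat p (x - eta) (Rabs (x - u)) ltac:(lra) ltac:(lra)).
    nra.
Qed.

(* Replacing a jump between [a] and [b] by the detour a -> u -> v -> b through
   two near-zero values loses at most (p+1) eta, because |b - a| <= max a b. *)
Lemma rpow_dist_le_detour p eta a b u v : 1 <= p ->
  0 <= a <= 1 -> 0 <= b <= 1 -> 0 <= u < eta -> 0 <= v < eta ->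
  rpow (Rabs (b - a)) p <= rpow (Rabs (u - a)) p + rpow (Rabs (b - v)) p + (p + 1) * eta.
Proof.
  intros Hp Ha Hb Hu Hv.
  pose proof (rpow_ge0 (Rabs (u - a)) p); pose proof (rpow_ge0 (Rabs (b - v)) p).
  destruct (Rle_or_lt a b) as [Hab | Hba].
  - pose proof (rpow_le_shift_small p eta b v Hp Hb Hv).
    pose proof (rpow_le_compat p (Rabs (b - a)) b ltac:(lra)
                  ltac:(rewrite Rabs_pos_eq; lra)).
    lra.
  - pose proof (rpow_le_shift_small p eta a u Hp Ha Hu) as Hshift.
    rewrite (Rabs_minus_sym a u) in Hshift.
    pose proof (rpow_le_compat p (Rabs (b - a)) a ltac:(lra)
                  ltac:(rewrite Rabs_minus_sym, Rabs_pos_eq; lra)).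
    lra.
Qed.

Lemma last_In {A} (x : A) l d : In (last (x :: l) d) (x :: l).
Proof.
  revert x; induction l as [|y l IH]; intro x; [now left|].
  change (last (x :: y :: l) d) with (last (y :: l) d); right; apply IH.
Qed.

Lemma last_app_cons {A} (l : list A) x r d : last (l ++ x :: r) d = last (x :: r) d.
Proof.
  induction l as [|y l IH]; [reflexivity|].
  rewrite <- app_comm_cons; simpl; rewrite IH.
  destruct l; reflexivity.
Qed.

Lemma StronglySorted_app {A} (R : A -> A -> Prop) l1 l2 :
  StronglySorted R l1 -> StronglySorted R l2 ->
  (forall x y, In x l1 -> In y l2 -> R x y) -> StronglySorted R (l1 ++ l2).
Proof.
  intros H1 H2 H12; induction H1 as [|x l1 _ IH Hx]; [exact H2|].
  constructor.
  - apply IH; intros; apply H12; [right|]; auto.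
  - apply Forall_app; split; [exact Hx|].
    apply Forall_forall; intros; apply H12; [left|]; auto.
Qed.

Lemma pvar_sum_ge0 f p l : 0 <= pvar_sum f p l.
Proof.
  induction l as [|x [|y l] IH]; simpl; try lra.
  pose proof (rpow_ge0 (Rabs (f y - f x)) p); simpl in IH; lra.
Qed.

Lemma pvar_sum_snoc f p x l y :
  pvar_sum f p (x :: l ++ [y]) =
  pvar_sum f p (x :: l) + rpow (Rabs (f y - f (last (x :: l) 0))) p.
Proof.
  revert x; induction l as [|z l IH]; intro x; simpl; [lra|].
  specialize (IH z); simpl in IH; rewrite IH; destruct l; simpl; lra.
Qed.

Lemma pvar_sum_app_cons f p l x r :
  pvar_sum f p (l ++ x :: r) = pvar_sum f p (l ++ [x]) + pvar_sum f p (x :: r).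
Proof.
  induction l as [|y [|z l] IH]; simpl; try lra.
  simpl in IH; rewrite IH; lra.
Qed.

Lemma pvar_sum_const f p a l : Forall (fun x => x = a) l -> pvar_sum f p l = 0.
Proof.
  induction 1 as [|x l -> Hl IH]; [reflexivity|].
  destruct Hl as [|y l ->]; [reflexivity|].
  change (rpow (Rabs (f a - f a)) p + pvar_sum f p (a :: l) = 0).
  rewrite IH, Rminus_diag, Rabs_R0, rpow_0_l; lra.
Qed.

Lemma pvar_sum_strictify f p l : forall a, StronglySorted Rle (a :: l) ->
  exists l', Sorted Rlt (a :: l') /\ last (a :: l') 0 = last (a :: l) 0 /\
             pvar_sum f p (a :: l') = pvar_sum f p (a :: l).
Proof.
  induction l as [|b l IH]; intros a Hal; [exists []; repeat constructor|].
  apply StronglySorted_inv in Hal as [Hbl Hab].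
  destruct (IH b Hbl) as (l' & Hs & Hlast & Hvar).
  destruct (Rle_lt_or_eq a b (Forall_inv Hab)) as [Hlt | <-].
  - exists (b :: l'); split; [|split].
    + constructor; [exact Hs | now constructor].
    + exact Hlast.
    + change (rpow (Rabs (f b - f a)) p + pvar_sum f p (b :: l') =
              rpow (Rabs (f b - f a)) p + pvar_sum f p (b :: l)); lra.
  - exists l'; split; [exact Hs|split; [exact Hlast|]].
    change (pvar_sum f p (a :: l') = rpow (Rabs (f a - f a)) p + pvar_sum f p (a :: l)).
    rewrite Rminus_diag, Rabs_R0, rpow_0_l; lra.
Qed.

Lemma Sorted_Rlt_StronglySorted_Rle l : Sorted Rlt l -> StronglySorted Rle l.
Proof.
  intro H; apply Sorted_StronglySorted; [intros x y z; lra|].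
  induction H as [|x l _ IH Hx]; constructor; [exact IH|].
  destruct Hx; constructor; lra.
Qed.

Lemma StronglySorted_between l : forall a x, StronglySorted Rle (a :: l) ->
  In x (a :: l) -> a <= x <= last (a :: l) 0.
Proof.
  induction l as [|b l IH]; intros a x Hs Hx.
  - destruct Hx as [<- | []]; cbn; lra.
  - apply StronglySorted_inv in Hs as [Hs Hab]; pose proof (Forall_inv Hab).
    change (last (a :: b :: l) 0) with (last (b :: l) 0).
    destruct Hx as [<- | Hx].
    + pose proof (IH b b Hs (or_introl eq_refl)); lra.
    + pose proof (IH b x Hs Hx); lra.
Qed.

Lemma StronglySorted_cons_app a l t r :
  StronglySorted Rle l -> StronglySorted Rle (t :: r) ->
  Forall (fun x => a <= x < t) l -> a <= t -> StronglySorted Rle (a :: l ++ t :: r).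
Proof.
  intros Hl Htr Hlt Hat.
  assert (Ht : forall y, In y (t :: r) -> t <= y).
  { apply StronglySorted_inv in Htr as [_ Htr]; rewrite Forall_forall in Htr.
    intros y [<- | Hy]; [lra | auto]. }
  rewrite Forall_forall in Hlt; constructor.
  - apply StronglySorted_app; [exact Hl | exact Htr |].
    intros x y Hx Hy; pose proof (Hlt x Hx); pose proof (Ht y Hy); lra.
  - apply Forall_forall; intros y Hy; apply in_app_or in Hy as [Hy | Hy].
    + pose proof (Hlt y Hy); lra.
    + pose proof (Ht y Hy); lra.
Qed.

Lemma sorted_split_at t Q : StronglySorted Rle Q ->
  exists Q1 Q2, Q = Q1 ++ Q2 /\ StronglySorted Rle Q1 /\ StronglySorted Rle Q2 /\
    Forall (fun x => x < t) Q1 /\ Forall (fun x => t <= x) Q2.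
Proof.
  induction 1 as [|x Q HQ IH HxQ].
  - exists [], []; repeat constructor.
  - destruct (Rlt_or_le x t) as [Hxt | Htx].
    + destruct IH as (Q1 & Q2 & -> & H1 & H2 & H1t & H2t).
      exists (x :: Q1), Q2; repeat split; auto; constructor; auto.
      now apply Forall_app in HxQ as [].
    + exists [], (x :: Q); repeat split; try now constructor.
      constructor; [exact Htx|].
      apply Forall_forall; intros y Hy; rewrite Forall_forall in HxQ.
      pose proof (HxQ y Hy); lra.
Qed.

Section Merge.

Variables (f : R -> R) (p eta : R).
Hypothesis (Hp : 1 <= p) (Heta : 0 <= eta <= 1).

Lemma rpow_dist_small u v : 0 <= f u < eta -> 0 <= f v < eta ->
  rpow (Rabs (f v - f u)) p <= eta.
Proof.
  intros Hu Hv.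
  assert (Rabs (f v - f u) <= eta) by (apply Rabs_le; lra).
  enough (rpow (Rabs (f v - f u)) p <= Rabs (f v - f u)) by lra.
  apply rpow_le_self; [exact Hp | split; [apply Rabs_pos | lra]].
Qed.

Lemma pvar_sum_app_small l1 l2 : (forall x, In x (l1 ++ l2) -> 0 <= f x < eta) ->
  pvar_sum f p (l1 ++ l2) <= pvar_sum f p l1 + pvar_sum f p l2 + eta.
Proof.
  intro Hsmall.
  destruct l2 as [|y r]; [rewrite app_nil_r; cbn [pvar_sum]; lra|].
  destruct l1 as [|x l]; [cbn [app pvar_sum]; lra|].
  rewrite pvar_sum_app_cons, <- app_comm_cons, pvar_sum_snoc.
  pose proof (pvar_sum_ge0 f p [y]).
  assert (rpow (Rabs (f y - f (last (x :: l) 0))) p <= eta); [|lra].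
  apply rpow_dist_small; apply Hsmall, in_or_app;
    [left; apply last_In | right; left; reflexivity].
Qed.

Lemma pvar_sum_insert_small a B b l :
  0 <= f a <= 1 -> 0 <= f b <= 1 -> (forall x, In x B -> 0 <= f x < eta) ->
  rpow (Rabs (f b - f a)) p + pvar_sum f p B + pvar_sum f p (b :: l) <=
  pvar_sum f p (a :: B ++ b :: l) + (p + 1) * eta.
Proof.
  intros Ha Hb HB.
  rewrite app_comm_cons, pvar_sum_app_cons, <- app_comm_cons.
  destruct B as [|u B]; [simpl; nra|].
  change (pvar_sum f p (a :: (u :: B) ++ [b])) with
    (rpow (Rabs (f u - f a)) p + pvar_sum f p (u :: B ++ [b])).
  rewrite pvar_sum_snoc.
  pose proof (rpow_dist_le_detour p eta (f a) (f b) (f u) (f (last (u :: B) 0)) Hp Ha Hb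
    (HB u (or_introl eq_refl)) (HB _ (last_In u B 0))).
  lra.
Qed.

(* Ties between Q and P are allowed, hence non-strict sortedness; the points
   of Q in [t_i, t_(i+1)) form the block inserted after t_i. *)
Lemma pvar_sum_merge P : forall a Q,
  StronglySorted Rle (a :: P) -> (forall x, In x (a :: P) -> 0 <= f x <= 1) ->
  StronglySorted Rle Q -> Forall (fun x => a <= x <= last (a :: P) 0) Q ->
  (forall x, In x Q -> 0 <= f x < eta) ->
  exists R, StronglySorted Rle (a :: R) /\ last (a :: R) 0 = last (a :: P) 0 /\
    pvar_sum f p (a :: P) + pvar_sum f p Q <=
    pvar_sum f p (a :: R) + 2 * INR (length P) * ((p + 1) * eta).
Proof.
  induction P as [|t P IH]; intros a Q HaP HfP HQ HQbnd HfQ.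
  - exists []; split; [repeat constructor | split; [reflexivity|]].
    assert (HQa : Forall (fun x => x = a) Q).
    { eapply Forall_impl; [|exact HQbnd]; cbn; intros; lra. }
    rewrite (pvar_sum_const f p a Q HQa); cbn; lra.
  - destruct (sorted_split_at t Q HQ) as (Q1 & Q2 & -> & HQ1 & HQ2 & HQ1t & HQ2t).
    apply StronglySorted_inv in HaP as [HtP HaP].
    apply Forall_app in HQbnd as [HQ1bnd HQ2bnd].
    destruct (IH t Q2 HtP) as (R2 & HR2 & Hlast & Hvar).
    { intros x Hx; apply HfP; right; exact Hx. }
    { exact HQ2. }
    { apply Forall_forall; intros x Hx.
      rewrite Forall_forall in HQ2t, HQ2bnd.
      pose proof (HQ2t x Hx); pose proof (HQ2bnd x Hx); cbn in *; lra. }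
    { intros x Hx; apply HfQ, in_or_app; right; exact Hx. }
    exists (Q1 ++ t :: R2); split; [|split].
    + apply StronglySorted_cons_app; [exact HQ1 | exact HR2 | | exact (Forall_inv HaP)].
      apply Forall_forall; intros x Hx; rewrite Forall_forall in HQ1t, HQ1bnd.
      pose proof (HQ1t x Hx); pose proof (HQ1bnd x Hx); lra.
    + rewrite app_comm_cons, last_app_cons; exact Hlast.
    + pose proof (pvar_sum_insert_small a Q1 t R2 (HfP a (or_introl eq_refl))
        (HfP t (or_intror (or_introl eq_refl)))
        (fun x Hx => HfQ x (in_or_app _ _ _ (or_introl Hx)))).
      pose proof (pvar_sum_app_small Q1 Q2 HfQ).
      change (pvar_sum f p (a :: t :: P)) with
        (rpow (Rabs (f t - f a)) p + pvar_sum f p (t :: P)).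
      cbn [length]; rewrite S_INR.
      assert (0 <= p * eta) by nra.
      lra.
Qed.

Lemma pvar_sum_partition_merge P Q :
  (forall x, 0 <= x <= 1 -> 0 <= f x <= 1) -> is_partition01 P ->
  Sorted Rlt Q -> Forall (fun x => 0 <= x <= 1) Q -> Forall (fun x => f x < eta) Q ->
  exists PQ, is_partition01 PQ /\
    pvar_sum f p P + pvar_sum f p Q <= pvar_sum f p PQ + 2 * INR (length P) * ((p + 1) * eta).
Proof.
  intros Hf (Hlen & HPs & Hhd & Hlast) HQs HQ01 HQeta.
  destruct P as [|a P]; [cbn in Hlen; lia|]; cbn in Hhd; subst a.
  assert (HP01 : forall x, In x (0 :: P) -> 0 <= x <= 1).
  { intros x Hx; rewrite <- Hlast; apply StronglySorted_between; auto.
    now apply Sorted_Rlt_StronglySorted_Rle. }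
  destruct (pvar_sum_merge P 0 Q) as (R & HR & HRlast & Hvar).
  - now apply Sorted_Rlt_StronglySorted_Rle.
  - intros x Hx; apply Hf, HP01, Hx.
  - now apply Sorted_Rlt_StronglySorted_Rle.
  - now rewrite Hlast.
  - rewrite Forall_forall in HQ01, HQeta.
    intros x Hx; pose proof (Hf x (HQ01 x Hx)); pose proof (HQeta x Hx); lra.
  - destruct (pvar_sum_strictify f p R 0 HR) as (R' & HR' & Hlast' & Hvar').
    exists (0 :: R'); split; [split; [|split; [exact HR'|split; [reflexivity|]]]|].
    + destruct R' as [|r R']; [|cbn; lia].
      enough (0 = 1) by lra.
      now rewrite <- Hlast, <- HRlast, <- Hlast'.
    + rewrite Hlast', HRlast; exact Hlast.
    + cbn [length]; rewrite S_INR.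
      assert (0 <= p * eta) by nra.
      lra.
Qed.

End Merge.

Lemma rpow_inv_lt_of_lt_Rpower p s eps : 1 <= p -> 0 < eps -> 0 <= s < Rpower eps p ->
  rpow s (1 / p) < eps.
Proof.
  intros Hp Heps [[Hs | <-] Hlt]; [| rewrite rpow_0_l; lra].
  rewrite rpow_Rpower by lra.
  replace eps with (Rpower (Rpower eps p) (1 / p)) at 1
    by (rewrite Rpower_mult; replace (p * (1 / p)) with 1 by (field; lra);
        apply Rpower_1; exact Heps).
  apply Rlt_Rpower_l; [apply Rdiv_lt_0_compat |]; lra.
Qed.

Lemma BV_p_approx_sup p f : BV_p p f ->
  exists V, (forall l, is_partition01 l -> pvar_sum f p l <= V) /\
    forall d, 0 < d -> exists P, is_partition01 P /\ V - d < pvar_sum f p P.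
Proof.
  intros [M HM].
  set (sums := fun v => exists l, is_partition01 l /\ v = pvar_sum f p l).
  assert (H01 : is_partition01 [0; 1]) by (repeat split; repeat constructor; cbn; lra).
  destruct (completeness sums) as [V [HVub HVlub]].
  - exists M; intros v [l [Hl ->]]; auto.
  - exists (pvar_sum f p [0; 1]), [0; 1]; auto.
  - exists V; split; [intros l Hl; apply HVub; exists l; auto|].
    intros d Hd; apply NNPP; intro Hno.
    enough (V <= V - d) by lra.
    apply HVlub; intros v [l [Hl ->]].
    apply Rnot_lt_le; intro Hlt; apply Hno; exists l; auto.
Qed.

Theorem lemma3p4 (p : R) (f : R -> R) :
  1 <= p -> BV_p p f ->
  (forall x, 0 <= x <= 1 -> 0 <= f x <= 1) ->
  forall eps : R, 0 < eps ->
  exists eta : R, 0 < eta /\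
    forall xs : list R,
      Sorted Rlt xs ->
      Forall (fun x => 0 <= x <= 1) xs ->
      Forall (fun x => f x < eta) xs ->
      rpow (pvar_sum f p xs) (1 / p) < eps.
Proof.
  intros Hp HBV Hf eps Heps.
  destruct (BV_p_approx_sup p f HBV) as (V & HV & Hsup).
  set (d := Rpower eps p).
  assert (Hd : 0 < d) by apply exp_pos.
  destruct (Hsup (d / 2) ltac:(lra)) as (P & HP & HPV).
  set (n := INR (length P)); assert (Hn : 0 <= n) by apply pos_INR.
  set (eta := Rmin 1 (d / (4 * (n + 1) * (p + 1)))).
  assert (Heta : 0 < eta <= 1).
  { split; [apply Rmin_glb_lt; [lra | apply Rdiv_lt_0_compat; nra] | apply Rmin_l]. }
  assert (Hbudget : 2 * n * ((p + 1) * eta) <= d / 2).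
  { assert (Hle : eta * (4 * (n + 1) * (p + 1)) <= d).
    { apply (Rmult_le_reg_r (/ (4 * (n + 1) * (p + 1)))); [apply Rinv_0_lt_compat; nra|].
      rewrite Rmult_assoc, Rinv_r by nra; rewrite Rmult_1_r; apply Rmin_r. }
    assert (0 <= p * eta) by nra.
    lra. }
  exists eta; split; [lra|]; intros Q HQs HQ01 HQeta.
  apply rpow_inv_lt_of_lt_Rpower; [exact Hp | exact Heps | split; [apply pvar_sum_ge0|]].
  apply Rnot_le_lt; intro HQd; fold d in HQd.
  destruct (pvar_sum_partition_merge f p eta Hp ltac:(lra) P Q Hf HP HQs HQ01 HQeta)
    as (PQ & HPQ & Hmerge).
  pose proof (HV PQ HPQ); fold n in Hmerge; lra.
Qed.
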